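(* Let $c,d\in\mathbb{N}$, $I=\mathbb{N}^d\times[c]$, $I_n=[n]^d\times[c]$. Let $\mathfrak{M}=(M_n)_{n\ge1}$ be a $\mathrm{Sym}$-invariant chain of monoids with $M_n\subseteq\mathbb{Z}_{\ge0}^{(I_n)}$ for all $n$, and let $M=\bigcup_{n\ge1}M_n$. Then the following are equivalent: (i) $\mathfrak{M}$ stabilizes (i.e. there is $p\in\mathbb{N}$ with $M_n=\mathbb{Z}_{\ge0}\mathrm{Sym}(n)(M_m)$ for all $n\ge m\ge p$) and $M_n$ is finitely generated for all sufficiently large $n$; (ii) there exist $p\in\mathbb{N}$ and a finite equivariant Hilbert basis $\mathcal{H}_p$ of $M_p$ that is also an equivariant Hilbert basis of $M_n$ for all $n\ge p$; (iii) there exist $q,q'\in\mathbb{N}$ such that for all $n\ge q$: (a) $M_n=M\cap\mathbb{Z}^{(I_n)}$, and (b) $M_n$ has a finite Hilbert basis consisting of elements of support size at most $q'$; (iv) $M$ has a finite equivariant Hilbert basis.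
   Context: $\mathbb{N}=\{1,2,\dots\}$. $\mathbb{Z}^{(I)}$ is the free abelian group with basis $I$, $\mathbb{Z}_{\ge0}^{(I)}$ its nonnegative vectors; $\mathbb{Z}^{(I_n)}\subseteq\mathbb{Z}^{(I)}$ by extension by zero. Support size = number of nonzero entries. For a set $A$, $\mathbb{Z}_{\ge0}A$ is the set of finite $\mathbb{Z}_{\ge0}$-linear combinations of elements of $A$. A Hilbert basis of a monoid $M$ is a minimal generating set (with respect to $\mathbb{Z}_{\ge0}$-combinations). $\mathrm{Sym}(n)$ is the symmetric group on $[n]$, embedded in $\mathrm{Sym}(n+1)$ as stabilizer of $n+1$; $\mathrm{Sym}=\bigcup_n\mathrm{Sym}(n)$ acts on $\mathbb{Z}^{(I)}$ by linear extension of $\sigma(\mathbf{e}_{(i_1,\dots,i_d),j})=\mathbf{e}_{(\sigma(i_1),\dots,\sigma(i_d)),j}$, restricting to $\mathrm{Sym}(n)$ on $\mathbb{Z}^{(I_n)}$; $G(A)=\{\sigma(\mathbf{u})\mid\sigma\in G,\mathbf{u}\in A\}$. A $\mathrm{Sym}$-invariant chain of monoids is $(M_n)_{n\ge1}$ with $M_n\subseteq\mathbb{Z}^{(I_n)}$ a monoid, $M_m\subseteq M_n$ for $m\le n$, each $M_n$ $\mathrm{Sym}(n)$-invariant. $\mathcal{H}\subseteq M_n$ (resp. $\subseteq M$) is an equivariant Hilbert basis if $\mathrm{Sym}(n)(\mathcal{H})$ (resp. $\mathrm{Sym}(\mathcal{H})$) is a Hilbert basis. *)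

From Stdlib Require List.
From mathcomp Require Import all_boot all_order all_fingroup all_algebra.
Set Implicit Arguments. Unset Strict Implicit. Unset Printing Implicit Defensive.
Import GRing.Theory Num.Theory.
Local Open Scope ring_scope.

(* Index set I = N^d x [c]; coordinates of the N^d part are positive naturals
   (N = {1,2,...}); the [c] part is represented by 'I_c. *)
Definition idx (c d : nat) := (d.-tuple nat * 'I_c)%type.

(* Vectors of Z^(I), as integer-valued functions on I (finite support is
   always guaranteed by the hypotheses where needed). *)
Definition vec (c d : nat) := idx c d -> int.

Definition vset (c d : nat) := vec c d -> Prop.

Definition vzero {c d} : vec c d := fun _ => 0.
Definition vadd {c d} (u v : vec c d) : vec c d := fun x => u x + v x.

Definition in_In {c d} (n : nat) (x : idx c d) : bool :=
  all (fun k => (0 < k) && (k <= n))%N x.1.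

(* u lies in Z^(I_n) (extension by zero) *)
Definition supp_in {c d} (n : nat) (u : vec c d) : Prop :=
  forall x, u x != 0 -> in_In n x.

Definition nonneg {c d} (u : vec c d) : Prop := forall x, 0 <= u x.

Definition supp_size_le {c d} (u : vec c d) (k : nat) : Prop :=
  exists s : seq (idx c d),
    [/\ uniq s, (forall x, (u x != 0) <-> (x \in s)) & (size s <= k)%N].

Definition subset {c d} (A B : vset c d) : Prop := forall u, A u -> B u.
Definition seteq {c d} (A B : vset c d) : Prop := forall u, A u <-> B u.

Definition is_monoid {c d} (A : vset c d) : Prop :=
  A vzero /\ (forall u v, A u -> A v -> A (vadd u v)).

Definition finite_set {c d} (A : vset c d) : Prop :=
  exists s : seq (vec c d), forall u, A u <-> List.In u s.

Definition nncomb {c d} (A : vset c d) : vset c d := fun u =>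
  exists s : seq (nat * vec c d),
    (forall p, List.In p s -> A p.2) /\
    (forall x, u x = \sum_(p <- s) ((p.1)%:Z * p.2 x)).

Definition hilbert_basis {c d} (M H : vset c d) : Prop :=
  [/\ subset H M, seteq (nncomb H) M &
      forall H', subset H' H -> subset M (nncomb H') -> subset H H'].

(* A permutation of [n] = {1..n}, viewed as a map on N fixing all k > n
   (and 0). The element i of [n] corresponds to the ordinal i-1 of 'I_n. *)
Definition perm_nat (n : nat) (s : {perm 'I_n}) (k : nat) : nat :=
  if k is k'.+1 then
    match (@insub nat (fun j => j < n)%N _ k') with
    | Some i => (s i).+1
    | None => k
    end
  else 0.

(* action of sigma in Sym(n): sigma(e_{(i1..id),j}) = e_{(sigma i1,..,sigma id),j},
   i.e. (sigma u)(i,j) = u(sigma^-1 i, j) *)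
Definition act {c d} (n : nat) (s : {perm 'I_n}) (u : vec c d) : vec c d :=
  fun x => u (map_tuple (perm_nat s^-1) x.1, x.2).

Definition orbitn {c d} (n : nat) (A : vset c d) : vset c d := fun u =>
  exists (s : {perm 'I_n}) (v : vec c d), A v /\ u = act s v.

Definition orbit {c d} (A : vset c d) : vset c d := fun u =>
  exists n, (1 <= n)%N /\ orbitn n A u.

Definition sym_invariant {c d} (n : nat) (A : vset c d) : Prop :=
  forall (s : {perm 'I_n}) u, A u -> A (act s u).

Definition sym_chain {c d} (M : nat -> vset c d) : Prop :=
  [/\ forall n, (1 <= n)%N -> is_monoid (M n),
      forall n u, (1 <= n)%N -> M n u -> supp_in n u /\ nonneg u,
      forall m n, (1 <= m <= n)%N -> subset (M m) (M n) &
      forall n, (1 <= n)%N -> sym_invariant n (M n)].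

Definition chain_union {c d} (M : nat -> vset c d) : vset c d := fun u =>
  exists n, (1 <= n)%N /\ M n u.

Definition stabilizes {c d} (M : nat -> vset c d) : Prop :=
  exists p, (1 <= p)%N /\
    forall m n, (p <= m <= n)%N -> seteq (M n) (nncomb (orbitn n (M m))).

Definition fin_generated {c d} (A : vset c d) : Prop :=
  exists H, finite_set H /\ subset H A /\ seteq (nncomb H) A.

Definition eq_hilbert_basis_n {c d} (n : nat) (A H : vset c d) : Prop :=
  subset H A /\ hilbert_basis A (orbitn n H).

Definition eq_hilbert_basis {c d} (A H : vset c d) : Prop :=
  subset H A /\ hilbert_basis A (orbit H).

(* Each M_n, and the union M, is a positive monoid (nonnegative vectors of finite support), so
   it has a unique Hilbert basis: its set of irreducible elements. Every condition is therefore a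
   statement about irreducibles. The key observation is that a permutation of [N] carrying a vector
   supported in I_m back into I_m acts on it like a permutation of [m]. Hence stabilization from p
   gives M_n ∩ Z^(I_m) = M_m for p <= m <= n, irreducibles of M_m stay irreducible in M_n, and for r
   large the Sym(n)-orbits of the finitely many irreducibles of M_r are exactly the irreducibles of
   M_n: this is (i) => (ii), and (ii) gives (i) and (iii) directly. For (iii) => (iv), an irreducible
   of M whose support has at most q' elements involves at most d q' indices, so it is a permuted copy
   of an irreducible supported in I_N, N = max(q, d q'). For (iv) => (ii), the finite basis lies in
   some M_p, and restricting permutations shows that its Sym(n)-orbit generates M_n for n >= p. *)

From mathcomp Require Import all_boot all_order all_fingroup all_algebra zify.
From Stdlib Require Import Classical ClassicalEpsilon FunctionalExtensionality.
Set Implicit Arguments. Unset Strict Implicit. Unset Printing Implicit Defensive.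
Import GRing.Theory Num.Theory.
Local Open Scope ring_scope.

Lemma perm_extend (T : finType) (s : seq T) (g : T -> T) :
  {in s &, injective g} -> exists p : {perm T}, {in s, p =1 g}.
Proof.
elim: s => [|x s IH] g_inj; first by exists 1%g.
have [|p pg] := IH; first by move=> y z ys zs; apply: g_inj; rewrite inE ?ys ?zs orbT.
have [xs | xNs] := boolP (x \in s).
  by exists p => y; rewrite inE => /predU1P [->|]; apply: pg.
(* As x is fresh, the transposition fixes every [g y] with [y \in s]. *)
exists (p * tperm (p x) (g x))%g => y; rewrite inE permM.
have [-> _ | yx /= ys] := eqVneq y x; first by rewrite tpermL.
rewrite -(pg y ys) tpermD //; first by rewrite (inj_eq perm_inj) eq_sym.
by rewrite pg // (inj_in_eq g_inj) ?inE ?ys ?eqxx ?orbT // eq_sym.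
Qed.

Section PermNat.
Variable n : nat.
Implicit Type s : {perm 'I_n}.

Lemma perm_nat_ord s (i : 'I_n) : perm_nat s i.+1 = (s i).+1.
Proof. by rewrite /perm_nat insubT //= => lt_in; congr (s _).+1; apply: val_inj. Qed.

Lemma perm_nat_out s k : (n < k)%N -> perm_nat s k = k.
Proof. by case: k => // k lt_nk; rewrite /perm_nat insubF //; apply/negbTE; lia. Qed.

Lemma perm_natKV s : cancel (perm_nat s^-1) (perm_nat s).
Proof.
case=> // k; have [lt_kn | le_nk] := ltnP k n; last by rewrite !perm_nat_out.
by rewrite (perm_nat_ord _ (Ordinal lt_kn)) perm_nat_ord permKV.
Qed.

Lemma perm_natK s : cancel (perm_nat s) (perm_nat s^-1).
Proof. by move=> k; rewrite -{2}[s]invgK perm_natKV. Qed.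

Lemma perm_nat_inj s : injective (perm_nat s).
Proof. exact: can_inj (perm_natK s). Qed.

Lemma perm_nat_range s k : (0 < k <= n)%N -> (0 < perm_nat s k <= n)%N.
Proof.
case: k => // k lt_kn; have lt_kn' : (k < n)%N by lia.
by rewrite (perm_nat_ord _ (Ordinal lt_kn')) /= ltn_ord.
Qed.

End PermNat.

Lemma perm_nat_extend m (s : seq nat) (f : nat -> nat) :
  (forall k, k \in s -> 0 < k <= m)%N -> (forall k, k \in s -> 0 < f k <= m)%N ->
  {in s &, injective f} -> exists t : {perm 'I_m}, {in s, perm_nat t =1 f}.
Proof.
move=> s_range f_range f_inj.
pose g (i : 'I_m) : 'I_m := insubd i (f i.+1).-1.
have gE (i : 'I_m) : i.+1 \in s -> (g i).+1 = f i.+1.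
  by move=> /f_range f_i; rewrite val_insubd ifT; lia.
pose si := [seq i <- enum 'I_m | (val i).+1 \in s].
have [|t tg] := @perm_extend _ si g.
  move=> i j; rewrite !mem_filter => /andP [i_s _] /andP [j_s _] eq_g.
  by apply/val_inj/succn_inj/f_inj; rewrite -?gE ?eq_g.
exists t => k ks; have := s_range k ks; case: k ks => // k ks lt_km.
have lt_km' : (k < m)%N by lia.
by rewrite (perm_nat_ord _ (Ordinal lt_km')) tg ?gE // mem_filter ks mem_enum.
Qed.

Section Action.
Context {c d : nat}.
Implicit Types (u v : vec c d) (x : idx c d).

Definition perm_tuple n (s : {perm 'I_n}) (y : d.-tuple nat) : d.-tuple nat :=
  map_tuple (perm_nat s) y.

Lemma perm_tupleKV n (s : {perm 'I_n}) : cancel (perm_tuple s^-1) (perm_tuple s).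
Proof.
by move=> y; apply/val_inj; rewrite /= -map_comp; apply: map_id_in => k _; apply: perm_natKV.
Qed.

Lemma perm_tupleK n (s : {perm 'I_n}) : cancel (perm_tuple s) (perm_tuple s^-1).
Proof. by move=> y; rewrite -{2}[s]invgK perm_tupleKV. Qed.

Lemma actE n (s : {perm 'I_n}) u y j : act s u (perm_tuple s y, j) = u (y, j).
Proof. exact: (congr1 (fun z => u (z, j)) (perm_tupleK s y)). Qed.

Lemma actKV n (s : {perm 'I_n}) u : act s (act s^-1 u) = u.
Proof. by apply: functional_extensionality => -[y j]; rewrite -{1}[y](perm_tupleKV s) !actE. Qed.

Lemma actK n (s : {perm 'I_n}) u : act s^-1 (act s u) = u.
Proof. by rewrite -{2}[s]invgK actKV. Qed.

Lemma act_agree n N (t : {perm 'I_n}) (s : {perm 'I_N}) v :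
  (forall x, v x != 0 -> perm_tuple t x.1 = perm_tuple s x.1) -> act t v = act s v.
Proof.
have agree_at n1 n2 (t1 : {perm 'I_n1}) (t2 : {perm 'I_n2}) y j :
    (forall x, v x != 0 -> perm_tuple t1 x.1 = perm_tuple t2 x.1) ->
    v (perm_tuple t1^-1 y, j) != 0 -> act t1 v (y, j) = act t2 v (y, j).
  by move=> t12 nz; rewrite -[y](perm_tupleKV t1) actE (t12 _ nz) actE.
move=> ts; apply: functional_extensionality => -[y j].
have [nz_t | z_t] := boolP (v (perm_tuple t^-1 y, j) != 0); first exact: agree_at.
have [nz_s | z_s] := boolP (v (perm_tuple s^-1 y, j) != 0).
  by apply/esym/agree_at => // x /ts.
by rewrite /act /=; move: z_t z_s; rewrite !negbK => /eqP -> /eqP ->.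
Qed.

Lemma act_widen N K (s : {perm 'I_N}) : (N <= K)%N ->
  exists t : {perm 'I_K}, forall v, act t v = act s v.
Proof.
move=> le_NK.
have [|||t ts] := @perm_nat_extend K (iota 1 K) (perm_nat s).
- by move=> k; rewrite mem_iota; lia.
- move=> k; rewrite mem_iota => k_K; have [le_kN | lt_Nk] := leqP k N.
    by have := @perm_nat_range N s k; lia.
  by rewrite perm_nat_out //; lia.
- by move=> k l _ _; apply: perm_nat_inj.
have {}ts k : perm_nat t k = perm_nat s k.
  case: k => // k; have [le_kK | lt_Kk] := leqP k.+1 K.
    by apply: ts; rewrite mem_iota; lia.
  by rewrite !perm_nat_out //; lia.
by exists t => v; apply: act_agree => x _; apply/val_inj/eq_map.
Qed.

Lemma supp_in_mono m n v : (m <= n)%N -> supp_in m v -> supp_in n v.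
Proof. by move=> le_mn v_m x /v_m /allP x_m; apply/allP => k /x_m; lia. Qed.

Lemma supp_in_vadd n u v : nonneg u -> nonneg v -> supp_in n (vadd u v) ->
  supp_in n u /\ supp_in n v.
Proof.
move=> u_ge0 v_ge0 uv_n; split=> x nz; apply: uv_n; rewrite /vadd;
  by have := u_ge0 x; have := v_ge0 x; move: nz; lia.
Qed.

Definition cover n : seq (idx c d) :=
  [seq (map_tuple (@nat_of_ord n.+1) t, j) | t <- enum {: d.-tuple 'I_n.+1}, j <- enum 'I_c].

Lemma mem_cover n x : in_In n x -> x \in cover n.
Proof.
case: x => y j /allP /= y_n.
have -> : y = map_tuple (@nat_of_ord n.+1) (map_tuple inord y).
  apply/val_inj; rewrite /= -map_comp; apply/esym/map_id_in => k k_y /=.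
  by rewrite inordK //; have := y_n k k_y; lia.
by apply: allpairs_f; rewrite mem_enum.
Qed.

Lemma act_restrict n N (s : {perm 'I_N}) v : supp_in n v -> supp_in n (act s v) ->
  exists t : {perm 'I_n}, act t v = act s v.
Proof.
move=> v_n sv_n; pose L := flatten [seq tval x.1 | x <- cover n & v x != 0].
have L_supp k : k \in L -> exists2 x, v x != 0 & k \in tval x.1.
  by case/flatten_mapP => x; rewrite mem_filter => /andP [nz _]; exists x.
have supp_L x : v x != 0 -> {subset tval x.1 <= L}.
  by move=> nz k k_x; apply/flatten_mapP; exists x; rewrite // mem_filter nz mem_cover ?v_n.
have [|||t ts] := @perm_nat_extend n L (perm_nat s).
- by move=> k /L_supp [x /v_n /allP]; apply.
- move=> k /L_supp [[y j] nz k_y].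
  have /sv_n /allP : act s v (perm_tuple s y, j) != 0 by rewrite actE.
  by apply; apply: map_f.
- by move=> k l _ _; apply: perm_nat_inj.
by exists t; apply: act_agree => x nz; apply/val_inj/eq_in_map => k /(supp_L x nz) /ts.
Qed.

Lemma act_compress n q v : (d * q <= n)%N -> supp_in n v -> supp_size_le v q ->
  exists t : {perm 'I_n}, supp_in (d * q) (act t v).
Proof.
move=> le_dq_n v_n [l [_ l_supp size_l]]; pose L := flatten [seq tval x.1 | x <- l].
have size_L : (size L <= d * q)%N.
  suff -> : size L = (d * size l)%N by rewrite leq_mul2l size_l orbT.
  rewrite /L; elim: {l_supp size_l L} l => [|x l IH] /=; first by rewrite muln0.
  by rewrite size_cat size_tuple IH mulnS.
have supp_L x : v x != 0 -> {subset tval x.1 <= L}.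
  by move=> /l_supp x_l k k_x; apply/flatten_mapP; exists x.
have [|||t ts] := @perm_nat_extend n L (fun k => (index k L).+1).
- by move=> k /flatten_mapP [x /l_supp /v_n /allP]; apply.
- by move=> k; rewrite -index_mem => /leq_trans; apply; apply: leq_trans size_L le_dq_n.
- by move=> k l' k_L l_L /succn_inj; apply: index_inj.
exists t => -[y j]; rewrite -[y](perm_tupleKV t) actE => /[dup] nz /supp_L y_L.
apply/allP => _ /mapP [k k_y ->]; rewrite ts ?y_L //.
by have := y_L _ k_y; rewrite -index_mem => /leq_trans; apply.
Qed.

Lemma supp_size_le_cover n v : supp_in n v -> supp_size_le v (size (cover n)).
Proof.
move=> v_n; exists [seq x <- cover n | v x != 0]; split.
- rewrite filter_uniq // allpairs_uniq ?enum_uniq // => -[t j] [t' j'] _ _ /= [eq_t ->].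
  by congr pair; apply/val_inj/(inj_map val_inj).
- by move=> x; rewrite mem_filter; split=> [nz | /andP []//]; rewrite nz mem_cover ?v_n.
- by rewrite size_filter count_size.
Qed.

Lemma supp_size_le_act n (s : {perm 'I_n}) v q : supp_size_le v q -> supp_size_le (act s v) q.
Proof.
move=> [l [l_uniq l_supp size_l]].
pose f x : idx c d := (perm_tuple s x.1, x.2).
have f_inj : injective f.
  move=> [y j] [y' j'] eq_f; have /= eq_j := congr1 snd eq_f.
  by have /= /(can_inj (perm_tupleK s)) -> := congr1 fst eq_f; rewrite eq_j.
exists (map f l); rewrite map_inj_uniq // size_map; split=> // x.
have -> : x = f (perm_tuple s^-1 x.1, x.2) by case: x => y j; rewrite /f /= perm_tupleKV.
by rewrite (mem_map f_inj) -l_supp /f /= actE.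
Qed.

Lemma supp_size_leW v q q' : (q <= q')%N -> supp_size_le v q -> supp_size_le v q'.
Proof. by move=> le_q [l [? ? size_l]]; exists l; split=> //; apply: leq_trans le_q. Qed.

End Action.

Section Monoids.
Context {c d : nat}.
Implicit Types (A B G H : vset c d) (u v : vec c d).

Definition vscale k u : vec c d := fun x => k%:Z * u x.

Lemma monoid_vscale A k u : is_monoid A -> A u -> A (vscale k u).
Proof.
move=> [A0 AD] Au; elim: k => [|k IH].
  by have -> : vscale 0 u = vzero by apply: functional_extensionality => x; rewrite /vscale mul0r.
have -> : vscale k.+1 u = vadd u (vscale k u).
  by apply: functional_extensionality => x; rewrite /vadd /vscale; lia.
exact: AD.
Qed.

Lemma vadd0v v : vadd vzero v = v.
Proof. by apply: functional_extensionality => x; rewrite /vadd add0r. Qed.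

Lemma vaddv0 v : vadd v vzero = v.
Proof. by apply: functional_extensionality => x; rewrite /vadd addr0. Qed.

Definition vsum (s : seq (nat * vec c d)) : vec c d := fun x => \sum_(p <- s) p.1%:Z * p.2 x.

Lemma vsum_cons p s : vsum (p :: s) = vadd (vscale p.1 p.2) (vsum s).
Proof. by apply: functional_extensionality => x; rewrite /vsum big_cons. Qed.

Lemma nncomb_closed A G : is_monoid A -> subset G A -> subset (nncomb G) A.
Proof.
move=> A_mon GA u [s [s_G u_s]].
have -> : u = vsum s by apply: functional_extensionality.
elim: s s_G {u_s} => [|p s IH] s_G.
  have -> : vsum [::] = vzero by apply: functional_extensionality => x; rewrite /vsum big_nil.
  exact: A_mon.1.
rewrite vsum_cons; apply: A_mon.2; last by apply: IH => q q_s; apply: s_G; right.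
by apply: monoid_vscale => //; apply: GA; apply: s_G; left.
Qed.

Lemma nncomb_monoid G : is_monoid (nncomb G).
Proof.
split; first by exists [::]; split=> // x; rewrite big_nil.
move=> u v [s [s_G u_s]] [t [t_G v_t]]; exists (s ++ t); split.
  by move=> p /List.in_app_iff [/s_G | /t_G].
by move=> x; rewrite /vadd u_s v_t big_cat.
Qed.

Lemma nncomb_gen G u : G u -> nncomb G u.
Proof.
by move=> Gu; exists [:: (1%N, u)]; split=> [p [<-|] | x] //; rewrite big_seq1 mul1r.
Qed.

Lemma nncombS G G' : subset G G' -> subset (nncomb G) (nncomb G').
Proof. by move=> GG'; apply: nncomb_closed (nncomb_monoid G') _ => u /GG' /nncomb_gen. Qed.

Lemma nncomb_supp_in G n u : subset G nonneg -> nncomb G u -> supp_in n u ->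
  nncomb (fun v => G v /\ supp_in n v) u.
Proof.
move=> G_ge0 Gu; pose P v := nonneg v /\ (supp_in n v -> nncomb (fun v => G v /\ supp_in n v) v).
suff [_ gen] : P u by exact: gen.
apply: nncomb_closed Gu; last by move=> v Gv; split=> [|v_n]; [exact: G_ge0 | exact: nncomb_gen].
split; first by split=> // _; apply: (nncomb_monoid _).1.
move=> a b [a_ge0 a_gen] [b_ge0 b_gen]; split=> [x | /(supp_in_vadd a_ge0 b_ge0) [a_n b_n]].
  by rewrite /vadd addr_ge0.
by apply: (nncomb_monoid _).2; [apply: a_gen | apply: b_gen].
Qed.

Definition irreducible A u : Prop :=
  [/\ A u, u <> vzero & forall a b, A a -> A b -> u = vadd a b -> a = vzero \/ b = vzero].

Lemma irreducibleS A B u : subset B A -> B u -> irreducible A u -> irreducible B u.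
Proof. by move=> BA Bu [_ u0 u_irr]; split=> // a b /BA Aa /BA Ab; apply: u_irr. Qed.

Lemma irreducible_act n A u :
  sym_invariant n A -> irreducible A u -> forall s : {perm 'I_n}, irreducible A (act s u).
Proof.
move=> A_inv [Au u0 u_irr] s; split; first exact: A_inv.
  by move=> su0; apply: u0; rewrite -(actK s u) su0.
move=> a b Aa Ab su_ab.
have u_ab : u = vadd (act s^-1 a) (act s^-1 b) by rewrite -(actK s u) su_ab.
by case: (u_irr _ _ (A_inv _ _ Aa) (A_inv _ _ Ab) u_ab) => /(congr1 (act s));
  rewrite actKV => ->; [left | right].
Qed.

Lemma irreducible_in_generators A G u :
  is_monoid A -> subset G A -> subset A (nncomb G) -> irreducible A u -> G u.
Proof.
move=> [A0 AD] GA AG u_irr; pose P v := A v /\ (irreducible A v -> G v).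
suff [_ gen] : P u by exact: gen.
apply: (nncomb_closed _ _ (AG u _)); last 2 first.
- by move=> v Gv; split=> [|_]; [exact: GA | exact: Gv].
- by case: u_irr.
split; first by split=> // -[].
move=> a b [Aa a_gen] [Ab b_gen]; split=> [|ab_irr]; first exact: AD.
have [_ _ ab_split] := ab_irr.
case: (ab_split a b Aa Ab erefl) => [a0 | b0].
  by move: ab_irr; rewrite a0 vadd0v.
by move: ab_irr; rewrite b0 vaddv0.
Qed.

Definition positive_monoid A := is_monoid A /\ forall u, A u -> nonneg u /\ exists n, supp_in n u.

Lemma sum_cover_gt0 n v : nonneg v -> supp_in n v -> v <> vzero ->
  0 < \sum_(x <- cover n) v x.
Proof.
move=> v_ge0 v_n v0; have [x nz] : exists x, v x != 0.
  apply: NNPP => all0; apply: v0; apply: functional_extensionality => x.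
  by apply/eqP; apply: NNPP => nz; apply: all0; exists x; apply/negP.
rewrite (big_rem x) ?mem_cover ?v_n //= ltr_wpDr ?sumr_ge0 // lt0r nz.
exact: v_ge0.
Qed.

Lemma nncomb_irreducible A : positive_monoid A -> subset A (nncomb (irreducible A)).
Proof.
move=> [A_mon A_pos] u Au; have [u_ge0 [n u_n]] := A_pos u Au.
pose weight v := \sum_(x <- cover n) v x.
have weight_ge0 v : A v -> 0 <= weight v.
  by move=> /A_pos [v_ge0 _]; apply: sumr_ge0 => x _; apply: v_ge0.
suff IH k : forall v, A v -> supp_in n v -> weight v < k%:Z -> nncomb (irreducible A) v.
  by apply: (IH `|weight u|.+1) => //; have := weight_ge0 u Au; lia.
(* Induction on an upper bound for the weight: the parts of a splitting have positive weight. *)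
elim: k => [|k IH] v Av v_n lt_k; first by have := weight_ge0 v Av; lia.
have [-> | v0] := classic (v = vzero); first exact: (nncomb_monoid _).1.
have [v_irr | v_red] := classic (irreducible A v); first exact: nncomb_gen.
have [a [b [Aa Ab v_ab a0 b0]]] :
    exists a b, [/\ A a, A b, v = vadd a b, a <> vzero & b <> vzero].
  apply: NNPP => no_split; apply: v_red; split=> // a b Aa Ab v_ab.
  by apply: NNPP => /not_or_and [a0 b0]; apply: no_split; exists a, b.
have [a_ge0 _] := A_pos a Aa; have [b_ge0 _] := A_pos b Ab.
have [a_n b_n] : supp_in n a /\ supp_in n b by apply: supp_in_vadd; rewrite -?v_ab.
have w_ab : weight v = weight a + weight b by rewrite /weight v_ab big_split.
have wa : 0 < weight a := sum_cover_gt0 a_ge0 a_n a0.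
have wb : 0 < weight b := sum_cover_gt0 b_ge0 b_n b0.
by rewrite v_ab; apply: (nncomb_monoid _).2; apply: IH => //; lia.
Qed.

Lemma hilbert_basis_irreducible A H : positive_monoid A ->
  hilbert_basis A H <-> forall u, H u <-> irreducible A u.
Proof.
move=> A_pos; have A_mon := A_pos.1.
split=> [[HA H_gen H_min] u | H_irr].
  have AH : subset A (nncomb H) by move=> v /H_gen.
  split=> [|/(irreducible_in_generators A_mon HA AH) //].
  apply: (H_min (irreducible A)) => [v|]; last exact: nncomb_irreducible.
  exact: irreducible_in_generators.
have HA : subset H A by move=> u /H_irr [].
split=> // [u | H' H'H AH' u /H_irr u_irr].
  split=> [/(nncomb_closed A_mon HA) // | /(nncomb_irreducible A_pos)].
  by apply: nncombS => v /H_irr.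
by apply: irreducible_in_generators u_irr => // v /H'H /HA.
Qed.

End Monoids.

Lemma mem_List_In (T : eqType) (x : T) s : x \in s -> List.In x s.
Proof. by elim: s => //= y s IH; rewrite inE => /predU1P [->|/IH]; [left | right]. Qed.

Section Orbits.
Context {c d : nat}.
Implicit Types (G H : vset c d) (u v : vec c d).

Lemma finite_setS G H : finite_set H -> subset G H -> finite_set G.
Proof.
move=> [s s_H] GH; pose inG u := if excluded_middle_informative (G u) then true else false.
exists (List.filter inG s) => u; rewrite List.filter_In /inG.
case: excluded_middle_informative => Gu; split=> [|[]] //.
by move=> _; split; first exact/s_H/GH.
Qed.

Lemma finite_orbitn n H : finite_set H -> finite_set (orbitn n H).
Proof.
move=> [s s_H]; exists (List.flat_map (fun t => List.map (act t) s) (enum {perm 'I_n})) => u.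
rewrite List.in_flat_map.
split=> [[t [v [/s_H Hv ->]]] | [t [_ /List.in_map_iff [v [<- /s_H Hv]]]]].
  by exists t; split; [apply: mem_List_In; rewrite mem_enum | apply: List.in_map].
by exists t, v.
Qed.

Lemma orbitn_restrict m n H u : subset H (supp_in m) -> orbitn n H u -> supp_in m u ->
  orbitn m H u.
Proof.
move=> H_m [s [v [Hv ->]]] sv_m; have [t ts] := act_restrict (H_m v Hv) sv_m.
by exists t, v; rewrite ts.
Qed.

End Orbits.

Section Chain.
Context {c d : nat} (M : nat -> vset c d).
Hypothesis hM : sym_chain M.
Local Notation U := (chain_union M).

Lemma chain_positive n : (1 <= n)%N -> positive_monoid (M n).
Proof.
case: hM => M_mon M_supp _ _ n1; split=> [|u Mu]; first exact: M_mon.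
by have [u_n u_ge0] := M_supp n u n1 Mu; split=> //; exists n.
Qed.

Lemma chain_sub_union n : (1 <= n)%N -> subset (M n) U.
Proof. by move=> n1 u Mu; exists n. Qed.

Lemma union_positive : positive_monoid U.
Proof.
case: hM => M_mon M_supp M_incr _; split; last first.
  by move=> u [n [n1 /(chain_positive n1).2]].
split; first by exists 1%N; split=> //; apply: (M_mon 1%N isT).1.
move=> u v [m [m1 Mu]] [n [n1 Mv]]; exists (maxn m n); split; first lia.
have mn1 : (1 <= maxn m n)%N by lia.
by apply: (M_mon _ mn1).2; [apply: (M_incr m) | apply: (M_incr n)] => //; lia.
Qed.

Lemma union_sym_invariant n : sym_invariant n U.
Proof.
case: hM => _ _ M_incr M_sym s u [m [m1 Mu]].
have [t ts] := @act_widen c d n (maxn m n) s (leq_maxr m n).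
exists (maxn m n); split; first lia.
by rewrite -ts; apply: M_sym; [lia | apply: (M_incr m) => //; lia].
Qed.

Lemma finite_subset_chain H : finite_set H -> subset H U ->
  exists2 p, (1 <= p)%N & subset H (M p).
Proof.
case: hM => _ _ M_incr _ [s s_H] HU.
suff [p p1 s_M] : exists2 p, (1 <= p)%N & forall h, List.In h s -> M p h.
  by exists p => // h /s_H /s_M.
have : forall h, List.In h s -> U h by move=> h /s_H /HU.
elim: s {s_H} => [_ | h s IH s_U]; first by exists 1%N.
have [p p1 s_M] := IH (fun h' hs => s_U h' (or_intror hs)).
have [m [m1 Mh]] := s_U h (or_introl erefl).
exists (maxn m p) => [|h' [<- | /s_M]]; first lia.
  by apply: (M_incr m) => //; lia.
by apply: M_incr; lia.
Qed.

Definition stable_from p :=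
  forall m n, (p <= m <= n)%N -> seteq (M n) (nncomb (orbitn n (M m))).

Lemma stable_from_restrict p m n u : (1 <= p)%N -> stable_from p -> (p <= m <= n)%N ->
  M n u -> supp_in m u -> M m u.
Proof.
case: hM => M_mon M_supp _ M_sym p1 stab pmn Mu u_m; have m1 : (1 <= m)%N by lia.
have orb_ge0 : subset (orbitn n (M m)) nonneg.
  by move=> _ [s [v [Mv ->]]] x; apply: (M_supp m v m1 Mv).2.
suff : nncomb (M m) u by apply: nncomb_closed (M_mon m m1) _ _.
apply: nncombS (nncomb_supp_in orb_ge0 ((stab m n pmn u).1 Mu) u_m) => v [orb_v v_m].
have [|t [w [Mw ->]]] := orbitn_restrict _ orb_v v_m; last exact: M_sym.
by move=> w /(M_supp m w m1) [].
Qed.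

Lemma irreducible_stable p m n u : (1 <= p)%N -> stable_from p -> (p <= m <= n)%N ->
  irreducible (M m) u -> irreducible (M n) u.
Proof.
case: hM => _ M_supp M_incr _ p1 stab pmn [Mu u0 u_irr]; have m1 : (1 <= m)%N by lia.
have [u_m _] := M_supp m u m1 Mu.
split=> [|//|a b Ma Mb u_ab]; first by apply: (M_incr m) Mu; lia.
have n1 : (1 <= n)%N by lia.
have [[_ a_ge0] [_ b_ge0]] := (M_supp n a n1 Ma, M_supp n b n1 Mb).
have [a_m b_m] := supp_in_vadd a_ge0 b_ge0 (eq_ind _ _ u_m _ u_ab).
by apply: u_irr u_ab; apply: (stable_from_restrict p1 stab pmn).
Qed.

Lemma stable_irreducibleE p r n : (1 <= p)%N -> stable_from p -> (p <= r <= n)%N ->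
  forall w, orbitn n (irreducible (M r)) w <-> irreducible (M n) w.
Proof.
case: hM => M_mon _ M_incr M_sym p1 stab prn w; have n1 : (1 <= n)%N by lia.
split=> [[s [h [h_irr ->]]] | w_irr].
  exact: irreducible_act (M_sym n n1) (irreducible_stable p1 stab prn h_irr) s.
have orb_M : subset (orbitn n (M r)) (M n).
  by move=> _ [s [v [Mv ->]]]; apply: M_sym => //; apply: (M_incr r) Mv; lia.
have M_gen : subset (M n) (nncomb (orbitn n (M r))) by move=> u /(stab r n prn u).
have [s [v [Mv w_sv]]] := irreducible_in_generators (M_mon n n1) orb_M M_gen w_irr.
have v_irr : irreducible (M n) v.
  by rewrite -(actK s v) -w_sv; apply: (irreducible_act (M_sym n n1) w_irr s^-1).
by exists s, v; split=> //; apply: irreducibleS v_irr => //; apply: M_incr; lia.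
Qed.

End Chain.

Section Equivalences.
Context {c d : nat} (M : nat -> vset c d).
Hypothesis hM : sym_chain M.
Local Notation U := (chain_union M).

Definition cond_i := stabilizes M /\ exists N, forall n, (N <= n)%N -> fin_generated (M n).
Definition cond_ii := exists p (Hp : vset c d), (1 <= p)%N /\ finite_set Hp /\
  eq_hilbert_basis_n p (M p) Hp /\ forall n, (p <= n)%N -> eq_hilbert_basis_n n (M n) Hp.
Definition cond_iii := exists q q', (1 <= q)%N /\ (1 <= q')%N /\
  forall n, (q <= n)%N ->
    (forall u, M n u <-> (U u /\ supp_in n u)) /\
    exists H, finite_set H /\ hilbert_basis (M n) H /\ forall u, H u -> supp_size_le u q'.
Definition cond_iv := exists H, finite_set H /\ eq_hilbert_basis U H.

Lemma eq_hilbert_basis_stable p Hp : (1 <= p)%N ->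
  (forall n, (p <= n)%N -> eq_hilbert_basis_n n (M n) Hp) -> stable_from M p.
Proof.
case: hM => M_mon _ M_incr M_sym p1 Hp_hb m n pmn u.
have [Hp_p _] := Hp_hb p (leqnn p); have [_ [_ Hp_gen _]] := Hp_hb n (ltac:(lia)).
split=> [/Hp_gen | ]; first apply: nncombS => _ [s [h [Hh ->]]].
  by exists s, h; split=> //; apply: (M_incr p) (Hp_p h Hh); lia.
apply: nncomb_closed (M_mon n _) _ u; first lia.
by move=> _ [s [v [Mv ->]]]; apply: M_sym; [lia | apply: (M_incr m) Mv; lia].
Qed.

Lemma ii_to_i : cond_ii -> cond_i.
Proof.
move=> [p [Hp [p1 [Hp_fin [_ Hp_hb]]]]].
split; first by exists p; split=> //; exact: (eq_hilbert_basis_stable p1 Hp_hb).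
exists p => n pn; have [_ [orb_M orb_gen _]] := Hp_hb n pn.
by exists (orbitn n Hp); split; [apply: finite_orbitn | split].
Qed.

Lemma i_to_ii : cond_i -> cond_ii.
Proof.
case: hM => M_mon _ M_incr _ [[p [p1 stab]] [N fg]].
pose r := maxn p N; have r1 : (1 <= r)%N by lia.
have [G [G_fin [GM G_gen]]] := fg r (leq_maxr p N).
have irr_r_hb n : (r <= n)%N -> eq_hilbert_basis_n n (M n) (irreducible (M r)).
  move=> rn; have prn : (p <= r <= n)%N by lia.
  split=> [u [Mu _ _] | ]; first by apply: (M_incr r) Mu; lia.
  apply/(hilbert_basis_irreducible _ (chain_positive hM _)); first lia.
  exact (stable_irreducibleE hM p1 stab prn).
exists r, (irreducible (M r)); split=> //; split; last by split; [apply: irr_r_hb | ].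
apply: finite_setS G_fin _ => u; apply: irreducible_in_generators (M_mon r r1) GM _.
by move=> v /G_gen.
Qed.

Lemma ii_to_iii : cond_ii -> cond_iii.
Proof.
case: hM => _ M_supp M_incr _ [p [Hp [p1 [Hp_fin [[Hp_p _] Hp_hb]]]]].
have stab := eq_hilbert_basis_stable p1 Hp_hb.
exists p, (size (@cover c d p)).+1; do 2!split=> //; move=> n pn; split=> [u | ].
  have n1 : (1 <= n)%N by lia.
  split=> [Mu | [[m [m1 Mu]] u_n]]; first by split; [exists n | apply: (M_supp n u n1 Mu).1].
  have [mn | nm] := leqP m n; first by apply: (M_incr m) Mu; lia.
  by apply: (stable_from_restrict hM p1 stab _ Mu u_n); lia.
have [_ Hp_hb_n] := Hp_hb n pn.
exists (orbitn n Hp); split; [exact: finite_orbitn | split=> // _ [s [h [Hh ->]]]].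
apply/supp_size_le_act/(supp_size_leW (leqnSn _))/supp_size_le_cover.
exact: (M_supp p h p1 (Hp_p h Hh)).1.
Qed.

Lemma iii_to_iv : cond_iii -> cond_iv.
Proof.
case: hM => _ M_supp M_incr _ [q [q' [q1 [_ iii]]]].
pose N := maxn q (d * q'); have N1 : (1 <= N)%N by lia.
have [MN_eq [HN [HN_fin [HN_hb _]]]] := iii N (leq_maxl _ _).
have HN_irr := (hilbert_basis_irreducible _ (chain_positive hM N1)).1 HN_hb.
exists (fun u => irreducible U u /\ supp_in N u); split.
  apply: finite_setS HN_fin _ => u [u_irr u_N]; have MNu : M N u by apply/MN_eq; case: u_irr.
  by apply/HN_irr; apply: irreducibleS (chain_sub_union N1) MNu u_irr.
split=> [u [[]] // | ].
apply/(hilbert_basis_irreducible _ (union_positive hM)) => w; split.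
  move=> [K [_ [s [h [[h_irr _] ->]]]]].
  exact: (irreducible_act (union_sym_invariant hM (n:=K)) h_irr s).
(* An irreducible of M involves at most d q' indices, so it can be moved into [N]^d x [c]. *)
move=> w_irr; have [[m [m1 Mw]] _ _] := w_irr.
pose n := maxn m N; have n1 : (1 <= n)%N by lia.
have Mnw : M n w by apply: (M_incr m) Mw; lia.
have [_ [Hn [_ [Hn_hb Hn_small]]]] := iii n (ltac:(lia)).
have w_small : supp_size_le w q'.
  apply/Hn_small/((hilbert_basis_irreducible _ (chain_positive hM n1)).1 Hn_hb).
  by apply: irreducibleS (chain_sub_union n1) Mnw w_irr.
have [|t tw_dq] := act_compress _ (M_supp n w n1 Mnw).1 w_small; first lia.
exists n; split=> //; exists t^-1%g, (act t w); rewrite actK; split=> //; split.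
  exact: (irreducible_act (union_sym_invariant hM (n:=n)) w_irr t).
by apply: supp_in_mono tw_dq; lia.
Qed.

Lemma iv_to_ii : cond_iv -> cond_ii.
Proof.
case: hM => M_mon M_supp M_incr M_sym [H [H_fin [HU H_hb]]].
have orb_irr := (hilbert_basis_irreducible _ (union_positive hM)).1 H_hb.
have [p p1 HM] := finite_subset_chain hM H_fin HU.
have H_hb_n n : (p <= n)%N -> eq_hilbert_basis_n n (M n) H.
  move=> pn; have n1 : (1 <= n)%N by lia.
  have HMn : subset H (M n) by move=> h /HM; apply: M_incr; lia.
  have orb_M : subset (orbitn n H) (M n) by move=> _ [s [h [Hh ->]]]; apply/M_sym/HMn.
  (* Each orbit element occurring in a decomposition of u in M_n is supported in [n]. *)
  have M_gen : subset (M n) (nncomb (orbitn n H)).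
    move=> u Mu; have [u_n _] := M_supp n u n1 Mu.
    have orb_ge0 : subset (orbit H) nonneg.
      by move=> v /orb_irr [/(union_positive hM).2 []].
    have [_ H_gen _] := H_hb.
    apply: nncombS (nncomb_supp_in orb_ge0 ((H_gen u).2 (chain_sub_union n1 Mu)) u_n).
    move=> v [[K [_ orb_v]] v_n]; apply: orbitn_restrict orb_v v_n => h /HMn.
    by move=> /(M_supp n h n1) [].
  split=> //; apply/(hilbert_basis_irreducible _ (chain_positive hM n1)) => w; split.
    move=> orb_w; apply: irreducibleS (chain_sub_union n1) (orb_M w orb_w) _.
    by apply/orb_irr; exists n.
  exact: irreducible_in_generators (M_mon n n1) orb_M M_gen.
by exists p, H; do 3!split=> //; apply: H_hb_n.
Qed.

End Equivalences.

Theorem theorem3p14 (c d : nat) (M : nat -> vset c d) :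
  (0 < c)%N -> (0 < d)%N -> sym_chain M ->
  let cond_i :=
    stabilizes M /\
    exists N, forall n, (N <= n)%N -> fin_generated (M n) in
  let cond_ii :=
    exists p (Hp : vset c d), (1 <= p)%N /\ finite_set Hp /\
      eq_hilbert_basis_n p (M p) Hp /\
      forall n, (p <= n)%N -> eq_hilbert_basis_n n (M n) Hp in
  let cond_iii :=
    exists q q', (1 <= q)%N /\ (1 <= q')%N /\
      forall n, (q <= n)%N ->
        (forall u, M n u <-> (chain_union M u /\ supp_in n u)) /\
        exists H, finite_set H /\ hilbert_basis (M n) H /\
                  forall u, H u -> supp_size_le u q' in
  let cond_iv :=
    exists H, finite_set H /\ eq_hilbert_basis (chain_union M) H in
  (cond_i <-> cond_ii) /\ (cond_ii <-> cond_iii) /\ (cond_iii <-> cond_iv).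
Proof.
move=> _ _ hM /=.
have := i_to_ii hM; have := ii_to_i hM; have := ii_to_iii hM; have := iii_to_iv hM.
have := iv_to_ii hM; rewrite /cond_i /cond_ii /cond_iii /cond_iv; tauto.
Qed.
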